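(* The maximum size $W_{\max}(16,9)$ among sets of mutually unbiased weighing matrices of order $16$ and weight $9$ is $15$.
   Context: A weighing matrix of order $n$ and weight $k$ is an $n\times n$ matrix $W$ with entries in $\{1,-1,0\}$ such that $WW^T=kI_n$. Two weighing matrices $W_1,W_2$ of order $n$ and weight $k$ are unbiased if $\frac{1}{\sqrt{k}}W_1W_2^T$ is also a weighing matrix of order $n$ and weight $k$; a set is mutually unbiased if any two distinct members are unbiased. $W_{\max}(n,9)$ denotes the maximum size of a set of mutually unbiased weighing matrices of order $n$ and weight $9$. *)

From mathcomp Require Import all_boot all_order all_algebra.
From mathcomp Require Import algC.
Unset Printing Implicit Defensive.
Import Order.TTheory GRing.Theory Num.Theory.
Local Open Scope ring_scope.

Definition weighing_matrix (n k : nat) (W : 'M[int]_n) : Prop :=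
  (forall i j, W i j = 1 \/ W i j = -1 \/ W i j = 0) /\
  W *m W^T = (k%:R)%:M.

(* The scaled matrix is computed in the algebraic complex numbers
   algC; being a weighing matrix means it is the image of an integer weighing
   matrix (entries in {1,-1,0}). *)
Definition unbiased (n k : nat) (W1 W2 : 'M[int]_n) : Prop :=
  exists V : 'M[int]_n, weighing_matrix n k V /\
    ((sqrtC (GRing.natmul (1 : algC) k))^-1 *: map_mx (fun z : int => z%:~R : algC) (W1 *m W2^T))
      = map_mx (fun z : int => z%:~R : algC) V.

Definition MUWM (n k : nat) (S : seq 'M[int]_n) : Prop :=
  uniq S /\ (forall W, W \in S -> weighing_matrix n k W) /\
  (forall W1 W2, W1 \in S -> W2 \in S -> W1 != W2 -> unbiased n k W1 W2).

Definition Wmax_is (n k m : nat) : Prop :=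
  (exists S, MUWM n k S /\ size S = m) /\
  (forall S, MUWM n k S -> (size S <= m)%N).

From mathcomp Require Import all_boot all_order all_algebra algC.
From mathcomp Require Import zify ring.
Import Order.TTheory GRing.Theory Num.Theory.
Local Open Scope ring_scope.

(* Let x_v run over the m n rows of m mutually unbiased weighing
   matrices of order n and weight k.  Two rows of the same matrix have inner
   product k or 0, two rows of different matrices have inner product 0 or
   +-sqrt k, so sum_(v,w) <x_v, x_w>^4 is an explicit function of m: it is the
   squared norm of the 4-tensor F = sum_v x_v^(x)4.  By Cauchy-Schwarz,
   <F, Z>^2 <= |F|^2 |Z|^2 for the test tensor
     Z = al (d_ab d_cd + d_ac d_bd + d_ad d_bc) - be d_abcd,
   and <F, Z> only involves the row norms and the entries of the matrices.
   For n = 16, k = 9, al = 8, be = 9 this inequality reads m (15 - m) >= 0.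
   Lower bound: weighing matrices W1, W2 of weight q^2 are unbiased as soon as
   every entry of W1 W2^T lies in {0, q, -q}; an explicit family of 15 matrices
   of order 16 and weight 9 with this property is checked by computation. *)

Lemma sum_cauchy_schwarz (R : realDomainType) (T : finType) (f g : T -> R) :
  (\sum_i f i * g i) ^+ 2 <= (\sum_i f i ^+ 2) * (\sum_i g i ^+ 2).
Proof.
set P := \sum_i f i * g i; set F := \sum_i f i ^+ 2; set G := \sum_i g i ^+ 2.
have [G0 | G_neq0] := eqVneq G 0.
  have g0 i : g i = 0.
    by apply/eqP; rewrite -sqrf_eq0; apply/eqP/(psumr_eq0P _ G0) => // j _; rewrite sqr_ge0.
  by rewrite /P big1 ?expr0n ?G0 ?mulr0 // => i _; rewrite g0 mulr0.
have G_gt0 : 0 < G by rewrite lt_def G_neq0 sumr_ge0 // => i _; rewrite sqr_ge0.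
have : 0 <= \sum_i (G * f i - P * g i) ^+ 2 by rewrite sumr_ge0 // => i _; rewrite sqr_ge0.
have -> : \sum_i (G * f i - P * g i) ^+ 2 = G * (F * G - P ^+ 2).
  have expand i : (G * f i - P * g i) ^+ 2 =
      G ^+ 2 * f i ^+ 2 - 2 * G * P * (f i * g i) + P ^+ 2 * g i ^+ 2 by ring.
  rewrite (eq_bigr _ (fun i _ => expand i)) big_split sumrB /= -!mulr_sumr -/F -/G -/P.
  ring.
by rewrite pmulr_rge0 // subr_ge0 mulrC.
Qed.

Lemma sum_ord_const (R : pzSemiRingType) m (c : R) : \sum_(i < m) c = m%:R * c.
Proof. by rewrite sumr_const card_ord mulr_natl. Qed.

Section FourTensors.
Variables (R : comNzRingType) (n : nat).
Implicit Types f g : 'I_n -> 'I_n -> 'I_n -> 'I_n -> R.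

Definition sum4 f := \sum_(p : 'I_n * 'I_n * 'I_n * 'I_n) f p.1.1.1 p.1.1.2 p.1.2 p.2.

Lemma sum4E f : sum4 f = \sum_a \sum_b \sum_c \sum_d f a b c d.
Proof. by rewrite !pair_bigA. Qed.

Lemma eq_sum4 {f g} : (forall a b c d, f a b c d = g a b c d) -> sum4 f = sum4 g.
Proof. by move=> fg; apply: eq_bigr => p _; rewrite fg. Qed.

Lemma sum4D f g : sum4 (fun a b c d => f a b c d + g a b c d) = sum4 f + sum4 g.
Proof. exact: big_split. Qed.

Lemma sum4B f g : sum4 (fun a b c d => f a b c d - g a b c d) = sum4 f - sum4 g.
Proof. exact: sumrB. Qed.

Lemma sum4Z k f : sum4 (fun a b c d => k * f a b c d) = k * sum4 f.
Proof. by rewrite /sum4 mulr_sumr. Qed.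

Lemma sum4_sum (I : finType) (g : I -> 'I_n -> 'I_n -> 'I_n -> 'I_n -> R) :
  sum4 (fun a b c d => \sum_i g i a b c d) = \sum_i sum4 (g i).
Proof. exact: exchange_big. Qed.

Lemma sum4_prod (y : 'I_n -> R) :
  sum4 (fun a b c d => y a * y b * y c * y d) = (\sum_a y a) ^+ 4.
Proof.
rewrite sum4E !exprS expr0 mulr1 mulr_suml; apply: eq_bigr => a _.
rewrite [in RHS]mulr_suml mulr_sumr; apply: eq_bigr => b _.
rewrite [in RHS]mulr_suml !mulr_sumr; apply: eq_bigr => c _.
by rewrite !mulr_sumr; apply: eq_bigr => d _; ring.
Qed.

Definition kdelta (a b : 'I_n) : R := (a == b)%:R.

Lemma sum_kdelta (F : 'I_n -> R) c : \sum_d F d * kdelta c d = F c.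
Proof.
rewrite (bigD1 c) //= /kdelta eqxx mulr1 big1 ?addr0 // => d.
by rewrite eq_sym => /negbTE ->; rewrite mulr0.
Qed.

Lemma sum4_kdelta12_34 f :
  sum4 (fun a b c d => f a b c d * (kdelta a b * kdelta c d)) = \sum_a \sum_c f a a c c.
Proof.
rewrite sum4E; apply: eq_bigr => a _.
transitivity (\sum_b (\sum_c f a b c c) * kdelta a b); last exact: sum_kdelta.
apply: eq_bigr => b _; rewrite mulr_suml; apply: eq_bigr => c _.
rewrite -(sum_kdelta (fun d => f a b c d * kdelta a b) c).
by apply: eq_bigr => d _; rewrite mulrA.
Qed.

Lemma sum4_kdelta13_24 f :
  sum4 (fun a b c d => f a b c d * (kdelta a c * kdelta b d)) = \sum_a \sum_b f a b a b.
Proof.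
rewrite sum4E; apply: eq_bigr => a _; apply: eq_bigr => b _.
rewrite -(sum_kdelta (fun c => f a b c b) a); apply: eq_bigr => c _.
rewrite -(sum_kdelta (fun d => f a b c d * kdelta a c) b).
by apply: eq_bigr => d _; rewrite mulrA.
Qed.

Lemma sum4_kdelta14_23 f :
  sum4 (fun a b c d => f a b c d * (kdelta a d * kdelta b c)) = \sum_a \sum_b f a b b a.
Proof.
rewrite sum4E; apply: eq_bigr => a _; apply: eq_bigr => b _.
rewrite -(sum_kdelta (fun c => f a b c a) b); apply: eq_bigr => c _.
rewrite -(sum_kdelta (fun d => f a b c d * kdelta b c) a).
by apply: eq_bigr => d _; rewrite mulrA mulrAC.
Qed.

(* The symmetric 4-tensors invariant under signed permutations of the
   coordinates, which permute the rows of weighing matrices, are exactly the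
   combinations of [pairing4] and [diag4]; they are our test tensors. *)
Definition pairing4 a b c d :=
  kdelta a b * kdelta c d + kdelta a c * kdelta b d + kdelta a d * kdelta b c.

Definition diag4 a b c d := kdelta a b * kdelta a c * kdelta a d.

Definition test4 (al be : R) a b c d := al * pairing4 a b c d - be * diag4 a b c d.

Lemma sum4_pairing4 f : sum4 (fun a b c d => f a b c d * pairing4 a b c d) =
  \sum_a \sum_c (f a a c c + f a c a c + f a c c a).
Proof.
under eq_sum4 => a b c d do rewrite /pairing4 !mulrDr.
rewrite !sum4D sum4_kdelta12_34 sum4_kdelta13_24 sum4_kdelta14_23 -!big_split /=.
by apply: eq_bigr => a _; rewrite -!big_split.
Qed.

Lemma sum4_diag4 f : sum4 (fun a b c d => f a b c d * diag4 a b c d) = \sum_a f a a a a.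
Proof.
rewrite sum4E; apply: eq_bigr => a _.
transitivity (\sum_b f a b a a * kdelta a b); last exact: sum_kdelta.
apply: eq_bigr => b _.
transitivity (\sum_c f a b c a * kdelta a b * kdelta a c).
  apply: eq_bigr => c _.
  rewrite -(sum_kdelta (fun d => f a b c d * kdelta a b * kdelta a c) a).
  by apply: eq_bigr => d _; rewrite /diag4; ring.
rewrite -(sum_kdelta (fun c => f a b c a * kdelta a b) a).
by apply: eq_bigr => c _.
Qed.

Lemma sum4_pairing4_const : sum4 pairing4 = 3 * n%:R ^+ 2.
Proof.
have -> : sum4 pairing4 = sum4 (fun a b c d => 1 * pairing4 a b c d)
  by apply: eq_sum4 => *; rewrite mul1r.
by rewrite (sum4_pairing4 (fun _ _ _ _ => 1)) /= !sumr_const card_ord; ring.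
Qed.

Lemma sum4_diag4_const : sum4 diag4 = n%:R.
Proof.
have -> : sum4 diag4 = sum4 (fun a b c d => 1 * diag4 a b c d)
  by apply: eq_sum4 => *; rewrite mul1r.
by rewrite (sum4_diag4 (fun _ _ _ _ => 1)) sumr_const card_ord.
Qed.

Lemma test4_sqr al be a b c d : test4 al be a b c d ^+ 2 =
  al ^+ 2 * pairing4 a b c d + (6 * al ^+ 2 - 6 * al * be + be ^+ 2) * diag4 a b c d.
Proof.
rewrite /test4 /pairing4 /diag4 /kdelta.
repeat match goal with
  | E : (?x == ?x) = false |- _ => by rewrite eqxx in E
  | |- context [?x == ?y] => let E := fresh in case E: (x == y);
      [move/eqP: E => E; subst; rewrite ?eqxx | rewrite ?[y == x]eq_sym ?E]
  end.
all: rewrite /=; ring.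
Qed.

Lemma sum4_test4_sqr al be : sum4 (fun a b c d => test4 al be a b c d ^+ 2) =
  3 * al ^+ 2 * n%:R ^+ 2 + (6 * al ^+ 2 - 6 * al * be + be ^+ 2) * n%:R.
Proof.
under eq_sum4 => a b c d do rewrite test4_sqr.
by rewrite sum4D !sum4Z sum4_pairing4_const sum4_diag4_const mulrA (mulrC _ 3).
Qed.

Section Moment.
Variables (I : finType) (x : I -> 'I_n -> R).

Definition moment4 a b c d := \sum_i x i a * x i b * x i c * x i d.

Lemma sum4_moment4_sqr :
  sum4 (fun a b c d => moment4 a b c d ^+ 2) = \sum_i \sum_j (\sum_a x i a * x j a) ^+ 4.
Proof.
have sqrE a b c d : moment4 a b c d ^+ 2 =
    \sum_i \sum_j (x i a * x j a) * (x i b * x j b) * (x i c * x j c) * (x i d * x j d).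
  rewrite expr2 mulr_suml; apply: eq_bigr => i _.
  by rewrite mulr_sumr; apply: eq_bigr => j _; ring.
rewrite (eq_sum4 sqrE) sum4_sum; apply: eq_bigr => i _.
by rewrite sum4_sum; apply: eq_bigr => j _; apply: sum4_prod.
Qed.

Lemma sum4_moment4_test4 al be :
  sum4 (fun a b c d => moment4 a b c d * test4 al be a b c d) =
  3 * al * \sum_i (\sum_a x i a ^+ 2) ^+ 2 - be * \sum_i \sum_a x i a ^+ 4.
Proof.
under eq_sum4 => a b c d do rewrite /test4 mulrBr mulrCA [moment4 _ _ _ _ * (be * _)]mulrCA.
rewrite sum4B !sum4Z sum4_pairing4 sum4_diag4.
have pairings a c : moment4 a a c c + moment4 a c a c + moment4 a c c a =
    3 * \sum_i x i a ^+ 2 * x i c ^+ 2.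
  by rewrite /moment4 -!big_split mulr_sumr; apply: eq_bigr => i _ /=; ring.
have norm_sqr i : (\sum_a x i a ^+ 2) ^+ 2 = \sum_a \sum_c x i a ^+ 2 * x i c ^+ 2.
  by rewrite expr2 mulr_suml; apply: eq_bigr => a _; rewrite mulr_sumr.
under eq_bigr => a _ do under eq_bigr => c _ do rewrite pairings.
under [in RHS]eq_bigr => i _ do rewrite norm_sqr.
congr (_ - _ * _).
  under eq_bigr => a _ do rewrite -mulr_sumr.
  rewrite -mulr_sumr mulrA [al * 3]mulrC; congr (_ * _).
  by rewrite [RHS]exchange_big; apply: eq_bigr => a _ /=; rewrite [RHS]exchange_big.
by rewrite exchange_big; apply: eq_bigr => a _; apply: eq_bigr => i _; ring.
Qed.
End Moment.
End FourTensors.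

Lemma moment4_test4_ineq {R : realDomainType} {n} {I : finType} (x : I -> 'I_n -> R) al be :
  (3 * al * \sum_i (\sum_a x i a ^+ 2) ^+ 2 - be * \sum_i \sum_a x i a ^+ 4) ^+ 2 <=
  (\sum_i \sum_j (\sum_a x i a * x j a) ^+ 4) *
  (3 * al ^+ 2 * n%:R ^+ 2 + (6 * al ^+ 2 - 6 * al * be + be ^+ 2) * n%:R).
Proof.
rewrite -sum4_moment4_test4 -sum4_moment4_sqr -sum4_test4_sqr.
exact: sum_cauchy_schwarz.
Qed.

Section WeighingMatrices.
Context {n k : nat}.
Implicit Types W : 'M[int]_n.

Lemma weighing_entry_pow4 {W} : weighing_matrix n k W -> forall i j, W i j ^+ 4 = W i j ^+ 2.
Proof. by case=> entries _ i j; case: (entries i j) => [->|[->|->]]. Qed.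

Lemma weighing_row_norm {W} : weighing_matrix n k W -> forall i, \sum_a W i a ^+ 2 = k%:R.
Proof.
case=> _ /matrixP WWt i; move: (WWt i i); rewrite !mxE eqxx mulr1n => <-.
by apply: eq_bigr => a _; rewrite mxE expr2.
Qed.

Lemma weighing_gram_pow4 {W} : weighing_matrix n k W ->
  \sum_r \sum_s ((W *m W^T) r s) ^+ 4 = n%:R * k%:R ^+ 4.
Proof.
case=> _ ->; rewrite -sum_ord_const; apply: eq_bigr => r _.
rewrite (bigD1 r) //= big1 ?addr0 => [|s /negbTE sr]; rewrite mxE ?eqxx //.
by rewrite eq_sym sr mulr0n expr0n.
Qed.

Lemma unbiased_gram_pow4 {W1 W2} : (0 < k)%N -> unbiased n k W1 W2 ->
  \sum_r \sum_s ((W1 *m W2^T) r s) ^+ 4 = n%:R * k%:R ^+ 3.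
Proof.
move=> k_gt0 [V [wV /matrixP scaled]].
have entry r s : ((W1 *m W2^T) r s) ^+ 4 = k%:R ^+ 2 * V r s ^+ 2.
  have Vrs : (V r s)%:~R = (sqrtC k%:R)^-1 * ((W1 *m W2^T) r s)%:~R :> algC.
    by move: (scaled r s); rewrite !mxE => <-.
  rewrite -(weighing_entry_pow4 wV r s); apply: (@intr_inj algC).
  rewrite rmorphXn rmorphM !rmorphXn /= Vrs exprMn exprVn [sqrtC _ ^+ 4](exprM _ 2 2) sqrtCK.
  by rewrite rmorph_nat mulrA mulfV ?mul1r // expf_neq0 // pnatr_eq0 -lt0n.
under eq_bigr => r _ do under eq_bigr => s _ do rewrite entry.
rewrite -sum_ord_const; apply: eq_bigr => r _.
by rewrite -mulr_sumr (weighing_row_norm wV r); ring.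
Qed.

Lemma weighing_trmx_mul {W} : (0 < k)%N -> weighing_matrix n k W -> W^T *m W = k%:R%:M.
Proof.
move=> k_gt0 [_ WWt].
have k_neq0 : (k%:R : int) != 0 by rewrite pnatr_eq0 -lt0n.
have detW : \det W != 0.
  apply: contraNneq (expf_neq0 n k_neq0) => detW0.
  by rewrite -det_scalar -WWt det_mulmx detW0 mul0r.
have : (W^T *m W - k%:R%:M) *m (W^T *m \adj W^T) = 0.
  by rewrite mulmxBl !mulmxA -(mulmxA W^T) WWt mul_mx_scalar mul_scalar_mx subrr.
rewrite mul_mx_adj det_tr mul_mx_scalar => /eqP.
by rewrite scalemx_eq0 (negbTE detW) subr_eq0 => /eqP.
Qed.
End WeighingMatrices.

Lemma unbiased_of_gram_entries {n q} {W1 W2 : 'M[int]_n} : (0 < q)%N ->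
  weighing_matrix n (q ^ 2) W1 -> weighing_matrix n (q ^ 2) W2 ->
  (forall i j, (W1 *m W2^T) i j \in [:: 0; q%:Z; - q%:Z]) -> unbiased n (q ^ 2) W1 W2.
Proof.
move=> q_gt0 wW1 wW2 entries; set P := W1 *m W2^T.
have q_neq0 : q%:Z != 0 by rewrite -lt0n.
have sgzq : sgz q%:Z = 1 by apply: gtr0_sgz; rewrite ltz_nat.
have P_sgz i j : P i j = q%:Z * sgz (P i j).
  by move: (entries i j); rewrite !inE => /or3P [] /eqP ->;
    rewrite ?sgz0 ?sgzN ?sgzq ?mulr0 ?mulr1 ?mulrN1.
set V := \matrix_(i, j) sgz (P i j).
have PE : P = q%:Z *: V by apply/matrixP => i j; rewrite [RHS]mxE [V _ _]mxE -P_sgz.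
exists V; split; first split.
- by move=> i j; rewrite mxE; case: sgzP; auto.
- have PPt : P *m P^T = (q ^ 2)%:R *: (q ^ 2)%:R%:M.
    rewrite /P trmx_mul trmxK mulmxA -(mulmxA W1) (weighing_trmx_mul _ wW2) ?expn_gt0 ?q_gt0 //.
    by rewrite mul_mx_scalar -scalemxAl (proj2 wW1).
  move: PPt; rewrite PE linearZ /= -scalemxAl -scalemxAr scalerA natrX => /eqP.
  rewrite -expr2 natz -subr_eq0 -scalerBr scalemx_eq0 mulf_eq0 (negbTE q_neq0) subr_eq0 /=.
  by move/eqP.
- apply/matrixP => i j; rewrite [LHS]mxE [map_mx _ P _ _]mxE P_sgz [RHS]mxE [V _ _]mxE.
  by rewrite natrX sqrCK ?ler0n // intrM -pmulrn mulrA mulVf ?mul1r // pnatr_eq0 -lt0n.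
Qed.

Section MUWMBound.
Context {n k : nat} {S : seq 'M[int]_n}.
Hypotheses (muS : MUWM n k S) (k_gt0 : (0 < k)%N).
Let m := size S.
Let x (v : 'I_m * 'I_n) a := (nth 0 S v.1) v.2 a.

Lemma sum_rows (F : 'I_m * 'I_n -> int) : \sum_v F v = \sum_i \sum_r F (i, r).
Proof. by rewrite pair_bigA; apply: eq_bigr => -[]. Qed.

Lemma MUWM_weighing (i : 'I_m) : weighing_matrix n k (nth 0 S i).
Proof. by case: muS => _ [wS _]; apply/wS/mem_nth. Qed.

Lemma MUWM_unbiased {i j : 'I_m} : i != j -> unbiased n k (nth 0 S i) (nth 0 S j).
Proof. by case: muS => uniqS [_ uS] ij; apply: uS; rewrite ?mem_nth ?nth_uniq. Qed.

Lemma MUWM_gram_pow4 (i j : 'I_m) :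
  \sum_r \sum_s ((nth 0 S i *m (nth 0 S j)^T) r s) ^+ 4 =
  n%:R * k%:R ^+ 3 * (k%:R * (i == j)%:R + (i != j)%:R).
Proof.
have [<-|ij] := eqVneq i j.
  by apply: etrans (weighing_gram_pow4 (MUWM_weighing i)) _; rewrite /=; ring.
by rewrite (unbiased_gram_pow4 k_gt0 (MUWM_unbiased ij)) /=; ring.
Qed.

Lemma rows_norm_sqr : \sum_v (\sum_a x v a ^+ 2) ^+ 2 = m%:R * n%:R * k%:R ^+ 2.
Proof.
rewrite sum_rows -mulrA -sum_ord_const; apply: eq_bigr => i _.
rewrite -sum_ord_const; apply: eq_bigr => r _.
by rewrite /x /= (weighing_row_norm (MUWM_weighing i)).
Qed.

Lemma rows_pow4 : \sum_v \sum_a x v a ^+ 4 = m%:R * n%:R * k%:R.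
Proof.
rewrite sum_rows -mulrA -sum_ord_const; apply: eq_bigr => i _.
rewrite -sum_ord_const; apply: eq_bigr => r _.
rewrite /x /= -(weighing_row_norm (MUWM_weighing i) r).
by apply: eq_bigr => a _; rewrite (weighing_entry_pow4 (MUWM_weighing i)).
Qed.

Lemma rows_dot_pow4 : \sum_v \sum_w (\sum_a x v a * x w a) ^+ 4 =
  m%:R * n%:R * k%:R ^+ 3 * (k%:R + m%:R - 1).
Proof.
have gram i j : \sum_r \sum_s (\sum_a x (i, r) a * x (j, s) a) ^+ 4 =
    n%:R * k%:R ^+ 3 * (k%:R * (i == j)%:R + (i != j)%:R).
  rewrite -MUWM_gram_pow4; apply: eq_bigr => r _; apply: eq_bigr => s _.
  by rewrite mxE; congr (_ ^+ 4); apply: eq_bigr => a _; rewrite mxE.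
have others i : \sum_(j < m) (k%:R * (i == j)%:R + (i != j)%:R) = k%:R + m%:R - 1 :> int.
  rewrite (bigD1 i) //= eqxx /= (eq_bigr (fun _ => 1)) => [|j /negbTE ji]; last first.
    by rewrite eq_sym ji /=; ring.
  have m_gt0 : (0 < m)%N by apply: leq_ltn_trans (ltn_ord i).
  by rewrite sumr_const cardC1 card_ord -subn1 natrB //; ring.
rewrite sum_rows (eq_bigr _ (fun i _ => eq_bigr _ (fun r _ => sum_rows _))).
under eq_bigr => i _ do rewrite exchange_big /=.
under eq_bigr => i _ do under eq_bigr => j _ do rewrite gram.
transitivity (\sum_(i < m) n%:R * k%:R ^+ 3 * (k%:R + m%:R - 1) : int).
  by apply: eq_bigr => i _; rewrite -mulr_sumr others.
by rewrite sum_ord_const; ring.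
Qed.

Lemma MUWM_test4_ineq (al be : int) :
  (m%:R * n%:R * k%:R * (3 * al * k%:R - be)) ^+ 2 <=
  m%:R * n%:R * k%:R ^+ 3 * (k%:R + m%:R - 1) *
  (3 * al ^+ 2 * n%:R ^+ 2 + (6 * al ^+ 2 - 6 * al * be + be ^+ 2) * n%:R).
Proof.
have := moment4_test4_ineq x al be.
rewrite rows_dot_pow4 rows_norm_sqr rows_pow4.
have -> // : (m%:R * n%:R * k%:R * (3 * al * k%:R - be)) ^+ 2 =
  (3 * al * (m%:R * n%:R * k%:R ^+ 2) - be * (m%:R * n%:R * k%:R)) ^+ 2 by ring.
Qed.
End MUWMBound.

Lemma MUWM_16_9_size_le15 S : MUWM 16 9 S -> (size S <= 15)%N.
Proof. by move=> muS; have := MUWM_test4_ineq muS isT 8 9; nia. Qed.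

Definition decode (d : nat) : int := if d == 1%N then 1 else if d == 2%N then -1 else 0.

Fixpoint dot_code (r s : seq nat) : int :=
  if (r, s) is (x :: r', y :: s') then decode x * decode y + dot_code r' s' else 0.

Lemma dot_codeE {n} {r s : seq nat} : size r = n -> size s = n ->
  \sum_(j < n) decode (nth 0%N r j) * decode (nth 0%N s j) = dot_code r s.
Proof.
elim: r n s => [|x r IHr] n [|y s] //= <- //; first by rewrite big_ord0.
by case=> size_s; rewrite big_ord_recl /=; congr (_ + _); apply: IHr.
Qed.

Section Codes.
Variable n : nat.
Implicit Types c : seq (seq nat).

Definition code_shape c := (size c == n) && all (fun r => size r == n) c.

Definition mx_of_code c : 'M[int]_n := \matrix_(i, j) decode (nth 0%N (nth [::] c i) j).

Definition gram_code_ok (p : nat -> nat -> int -> bool) a b :=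
  all (fun i => all (fun j => p i j (dot_code (nth [::] a i) (nth [::] b j))) (iota 0 n))
    (iota 0 n).

Definition weighing_code k c :=
  code_shape c && gram_code_ok (fun i j z => z == if i == j then k%:R else 0) c c.

Definition unbiased_code q a b := gram_code_ok (fun _ _ z => z \in [:: 0; q%:Z; - q%:Z]) a b.

Definition MUWM_code q cs :=
  all (weighing_code (q ^ 2)) cs &&
  all (fun a => all (fun b => (a == b) || unbiased_code q a b) cs) cs && uniq cs.

Lemma code_row_size {c} (i : 'I_n) : code_shape c -> size (nth [::] c i) = n.
Proof. by case/andP=> /eqP size_c /allP rows; apply/eqP/rows/mem_nth; rewrite size_c. Qed.

Lemma mx_of_code_gram a b i j : code_shape a -> code_shape b ->
  (mx_of_code a *m (mx_of_code b)^T) i j = dot_code (nth [::] a i) (nth [::] b j).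
Proof.
move=> sa sb; rewrite !mxE -(dot_codeE (code_row_size i sa) (code_row_size j sb)).
by apply: eq_bigr => l _; rewrite !mxE.
Qed.

Lemma gram_code_okP {p a b} : gram_code_ok p a b ->
  forall i j : 'I_n, p i j (dot_code (nth [::] a i) (nth [::] b j)).
Proof.
have mem_iota_ord (i : 'I_n) : nat_of_ord i \in iota 0 n by rewrite mem_iota ltn_ord.
by move=> /allP ok i j; move/allP: (ok _ (mem_iota_ord i)); apply; apply: mem_iota_ord.
Qed.

Lemma weighing_of_code k c : weighing_code k c -> weighing_matrix n k (mx_of_code c).
Proof.
case/andP=> sc /gram_code_okP gram; split=> [i j|].
  by rewrite mxE /decode; case: ifP => _; [left | case: ifP => _; auto].
apply/matrixP=> i j; rewrite mx_of_code_gram // (eqP (gram i j)) !mxE.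
by case: (i =P j) => [->|/eqP ij]; rewrite ?eqxx //= ifN.
Qed.

Lemma unbiased_of_code q a b : (0 < q)%N ->
  weighing_code (q ^ 2) a -> weighing_code (q ^ 2) b -> unbiased_code q a b ->
  unbiased n (q ^ 2) (mx_of_code a) (mx_of_code b).
Proof.
move=> q_gt0 wa wb /gram_code_okP gram.
apply: unbiased_of_gram_entries => //; try exact: weighing_of_code.
by move=> i j; rewrite mx_of_code_gram ?gram //; [case/andP: wa | case/andP: wb].
Qed.

Lemma MUWM_of_code q cs : (1 < q)%N -> (0 < n)%N -> MUWM_code q cs ->
  MUWM n (q ^ 2) (map mx_of_code cs).
Proof.
move=> q_gt1 n_gt0 /andP [/andP [/allP wcs /allP ucs] uniq_cs].
have q_gt0 : (0 < q)%N by apply: ltnW.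
have ub a b : a \in cs -> b \in cs -> a != b -> unbiased_code q a b.
  by move=> acs bcs; move/allP: (ucs a acs) => /(_ b bcs) /orP [/eqP ->|//]; rewrite eqxx.
split; [|split].
- rewrite map_inj_in_uniq // => a b acs bcs mx_ab; apply/eqP/negPn/negP => ab.
  pose i0 := Ordinal n_gt0.
  have [sa _] := andP (wcs a acs); have [sb _] := andP (wcs b bcs).
  have := gram_code_okP (ub a b acs bcs ab) i0 i0.
  rewrite -mx_of_code_gram // -mx_ab mx_of_code_gram //.
  have [_ /gram_code_okP /(_ i0 i0) /eqP ->] := andP (wcs a acs).
  by rewrite natrX !inE; case/or3P => /eqP; nia.
- by move=> _ /mapP [c ccs ->]; apply/weighing_of_code/wcs.
- move=> _ _ /mapP [a acs ->] /mapP [b bcs ->] mx_ab.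
  apply: unbiased_of_code; rewrite ?wcs //; apply: ub => //.
  by apply: contraNneq mx_ab => ->.
Qed.
End Codes.

Definition MUWM_16_9_codes : seq (seq (seq nat)) := [::
  [:: [:: 1; 0; 0; 0; 0; 0; 0; 0; 1; 1; 1; 1; 1; 1; 1; 1];
     [:: 0; 1; 0; 0; 0; 0; 0; 0; 1; 2; 1; 2; 1; 2; 1; 2];
     [:: 0; 0; 1; 0; 0; 0; 0; 0; 1; 1; 2; 2; 1; 1; 2; 2];
     [:: 0; 0; 0; 1; 0; 0; 0; 0; 1; 2; 2; 1; 1; 2; 2; 1];
     [:: 0; 0; 0; 0; 1; 0; 0; 0; 1; 1; 1; 1; 2; 2; 2; 2];
     [:: 0; 0; 0; 0; 0; 1; 0; 0; 1; 2; 1; 2; 2; 1; 2; 1];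
     [:: 0; 0; 0; 0; 0; 0; 1; 0; 1; 1; 2; 2; 2; 2; 1; 1];
     [:: 0; 0; 0; 0; 0; 0; 0; 1; 1; 2; 2; 1; 2; 1; 1; 2];
     [:: 1; 1; 1; 1; 1; 1; 1; 1; 2; 0; 0; 0; 0; 0; 0; 0];
     [:: 1; 2; 1; 2; 1; 2; 1; 2; 0; 2; 0; 0; 0; 0; 0; 0];
     [:: 1; 1; 2; 2; 1; 1; 2; 2; 0; 0; 2; 0; 0; 0; 0; 0];
     [:: 1; 2; 2; 1; 1; 2; 2; 1; 0; 0; 0; 2; 0; 0; 0; 0];
     [:: 1; 1; 1; 1; 2; 2; 2; 2; 0; 0; 0; 0; 2; 0; 0; 0];
     [:: 1; 2; 1; 2; 2; 1; 2; 1; 0; 0; 0; 0; 0; 2; 0; 0];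
     [:: 1; 1; 2; 2; 2; 2; 1; 1; 0; 0; 0; 0; 0; 0; 2; 0];
     [:: 1; 2; 2; 1; 2; 1; 1; 2; 0; 0; 0; 0; 0; 0; 0; 2]];
  [:: [:: 0; 0; 0; 1; 2; 2; 2; 1; 2; 0; 0; 0; 0; 1; 1; 2];
     [:: 0; 0; 1; 0; 1; 1; 2; 1; 0; 2; 1; 1; 2; 0; 0; 0];
     [:: 0; 1; 0; 2; 0; 0; 2; 1; 0; 1; 2; 0; 0; 2; 2; 2];
     [:: 0; 1; 0; 2; 0; 0; 1; 1; 2; 0; 0; 1; 1; 0; 1; 1];
     [:: 0; 1; 0; 0; 2; 1; 2; 2; 2; 0; 0; 0; 0; 1; 2; 1];
     [:: 0; 1; 0; 1; 0; 0; 1; 2; 2; 0; 0; 1; 2; 2; 0; 2];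
     [:: 0; 1; 0; 1; 0; 0; 1; 1; 1; 1; 1; 0; 0; 1; 2; 0];
     [:: 1; 2; 2; 2; 2; 0; 0; 0; 0; 1; 1; 1; 2; 0; 0; 0];
     [:: 1; 2; 1; 1; 0; 1; 0; 0; 0; 1; 2; 1; 1; 0; 0; 0];
     [:: 1; 0; 2; 0; 1; 2; 0; 0; 0; 2; 2; 1; 0; 1; 2; 0];
     [:: 1; 0; 2; 0; 1; 1; 0; 0; 2; 0; 1; 2; 1; 0; 0; 2];
     [:: 1; 0; 0; 0; 2; 1; 1; 1; 0; 2; 2; 2; 2; 0; 0; 0];
     [:: 1; 0; 1; 0; 2; 2; 0; 0; 0; 2; 1; 0; 1; 2; 2; 0];
     [:: 1; 0; 1; 0; 1; 2; 0; 0; 2; 1; 0; 2; 2; 0; 0; 1];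
     [:: 1; 1; 2; 1; 0; 0; 2; 0; 1; 0; 0; 0; 0; 2; 1; 1];
     [:: 1; 1; 1; 2; 0; 0; 0; 2; 1; 0; 0; 0; 0; 1; 1; 2]];
  [:: [:: 0; 0; 1; 1; 2; 1; 0; 1; 0; 0; 0; 2; 1; 0; 2; 1];
     [:: 0; 0; 1; 1; 1; 2; 2; 0; 1; 1; 2; 0; 0; 2; 0; 0];
     [:: 0; 1; 2; 0; 0; 2; 0; 1; 0; 1; 0; 2; 0; 1; 1; 1];
     [:: 0; 1; 2; 1; 1; 1; 0; 0; 0; 0; 0; 1; 2; 0; 2; 1];
     [:: 0; 1; 1; 0; 0; 2; 0; 2; 0; 2; 0; 1; 1; 1; 0; 1];
     [:: 0; 1; 1; 0; 0; 2; 0; 1; 2; 0; 1; 0; 2; 0; 2; 2];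
     [:: 0; 1; 1; 0; 0; 1; 0; 2; 2; 0; 2; 2; 2; 0; 1; 0];
     [:: 1; 2; 0; 1; 0; 0; 2; 2; 2; 1; 1; 0; 0; 1; 0; 0];
     [:: 1; 2; 1; 0; 0; 0; 1; 1; 0; 0; 0; 1; 2; 0; 1; 1];
     [:: 1; 0; 2; 1; 2; 2; 0; 0; 2; 2; 2; 0; 0; 2; 0; 0];
     [:: 1; 0; 0; 2; 2; 0; 2; 0; 1; 0; 2; 0; 2; 1; 2; 0];
     [:: 1; 0; 0; 2; 1; 0; 2; 0; 0; 2; 1; 2; 0; 2; 0; 1];
     [:: 1; 0; 0; 2; 1; 0; 1; 0; 2; 1; 2; 0; 1; 0; 2; 0];
     [:: 1; 0; 0; 1; 1; 0; 1; 0; 1; 2; 0; 2; 0; 1; 0; 2];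
     [:: 1; 1; 0; 0; 2; 0; 1; 2; 1; 1; 1; 0; 0; 2; 0; 0];
     [:: 1; 1; 0; 0; 0; 1; 2; 1; 0; 0; 0; 1; 1; 0; 1; 2]];
  [:: [:: 0; 0; 1; 0; 2; 0; 2; 2; 1; 0; 0; 1; 1; 2; 1; 0];
     [:: 0; 0; 1; 0; 1; 0; 2; 2; 0; 2; 2; 0; 2; 0; 2; 1];
     [:: 0; 0; 1; 0; 1; 0; 1; 2; 2; 1; 0; 1; 0; 1; 1; 0];
     [:: 0; 0; 1; 0; 1; 0; 1; 1; 1; 2; 1; 0; 1; 0; 0; 1];
     [:: 0; 1; 2; 0; 0; 1; 1; 2; 1; 2; 0; 0; 2; 0; 1; 0];
     [:: 0; 1; 2; 0; 1; 2; 2; 0; 2; 2; 0; 0; 1; 0; 1; 0];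
     [:: 0; 1; 1; 1; 0; 1; 2; 0; 0; 0; 1; 2; 0; 1; 0; 2];
     [:: 1; 2; 0; 2; 0; 1; 0; 0; 0; 2; 2; 0; 1; 1; 0; 2];
     [:: 1; 2; 0; 1; 0; 2; 0; 0; 0; 2; 1; 1; 2; 0; 0; 2];
     [:: 1; 2; 0; 1; 0; 1; 0; 0; 2; 0; 0; 2; 0; 2; 1; 1];
     [:: 1; 0; 2; 1; 1; 0; 0; 2; 1; 1; 0; 0; 1; 0; 2; 0];
     [:: 1; 0; 0; 2; 2; 2; 0; 2; 0; 0; 1; 2; 0; 1; 0; 1];
     [:: 1; 0; 0; 2; 1; 0; 2; 1; 1; 1; 0; 0; 2; 0; 1; 0];
     [:: 1; 1; 0; 2; 0; 1; 0; 0; 2; 0; 1; 1; 0; 2; 2; 0];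
     [:: 1; 1; 0; 1; 2; 0; 0; 1; 0; 0; 2; 1; 0; 1; 0; 1];
     [:: 1; 1; 1; 0; 0; 2; 1; 0; 0; 0; 2; 2; 0; 2; 0; 2]];
  [:: [:: 0; 0; 1; 2; 2; 0; 2; 2; 0; 1; 1; 0; 0; 0; 2; 2];
     [:: 0; 0; 1; 2; 0; 2; 1; 1; 1; 0; 0; 2; 2; 1; 0; 0];
     [:: 0; 1; 2; 2; 2; 0; 0; 0; 1; 1; 2; 1; 0; 0; 1; 0];
     [:: 0; 1; 2; 2; 1; 0; 0; 0; 0; 0; 1; 0; 1; 1; 2; 1];
     [:: 0; 1; 2; 1; 2; 0; 0; 0; 0; 2; 0; 0; 2; 1; 2; 2];
     [:: 0; 1; 1; 2; 1; 0; 0; 0; 2; 2; 2; 1; 0; 0; 0; 2];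
     [:: 0; 1; 1; 1; 0; 0; 1; 2; 0; 1; 2; 0; 0; 0; 2; 1];
     [:: 1; 2; 0; 0; 2; 2; 1; 0; 2; 0; 0; 1; 1; 1; 0; 0];
     [:: 1; 2; 0; 0; 1; 1; 0; 2; 1; 0; 0; 1; 2; 1; 0; 0];
     [:: 1; 0; 2; 2; 0; 0; 1; 2; 2; 0; 0; 2; 2; 2; 0; 0];
     [:: 1; 0; 0; 0; 0; 2; 2; 2; 1; 2; 2; 2; 1; 0; 0; 0];
     [:: 1; 0; 0; 0; 0; 2; 2; 1; 0; 0; 0; 1; 2; 2; 2; 1];
     [:: 1; 0; 0; 0; 0; 1; 2; 1; 2; 1; 2; 2; 0; 1; 0; 0];
     [:: 1; 0; 0; 0; 0; 1; 1; 1; 1; 0; 0; 0; 1; 2; 2; 2];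
     [:: 1; 1; 0; 1; 1; 2; 0; 0; 0; 1; 1; 0; 0; 0; 1; 2];
     [:: 1; 1; 1; 0; 2; 1; 0; 0; 0; 2; 1; 0; 0; 0; 1; 1]];
  [:: [:: 0; 0; 0; 1; 2; 1; 0; 2; 0; 1; 0; 1; 2; 0; 1; 1];
     [:: 0; 0; 0; 1; 2; 1; 0; 1; 2; 2; 1; 0; 0; 2; 0; 2];
     [:: 0; 0; 0; 1; 1; 2; 0; 1; 2; 0; 1; 1; 0; 1; 0; 1];
     [:: 0; 0; 0; 1; 1; 1; 0; 1; 1; 1; 0; 2; 1; 0; 1; 0];
     [:: 0; 1; 0; 1; 2; 2; 1; 0; 1; 2; 0; 2; 0; 0; 0; 1];
     [:: 0; 1; 0; 1; 1; 0; 2; 2; 1; 2; 0; 1; 0; 0; 0; 2];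
     [:: 0; 1; 1; 2; 1; 0; 1; 0; 0; 0; 1; 0; 2; 2; 1; 0];
     [:: 1; 2; 2; 0; 0; 2; 0; 2; 0; 0; 1; 0; 1; 2; 1; 0];
     [:: 1; 2; 0; 1; 1; 0; 1; 0; 0; 0; 2; 0; 2; 2; 2; 0];
     [:: 1; 2; 1; 0; 0; 0; 2; 0; 0; 2; 0; 2; 2; 1; 1; 0];
     [:: 1; 0; 2; 2; 0; 1; 0; 1; 1; 2; 0; 1; 0; 0; 0; 1];
     [:: 1; 0; 1; 0; 2; 2; 0; 1; 1; 1; 0; 1; 0; 0; 0; 2];
     [:: 1; 0; 1; 0; 0; 1; 1; 2; 0; 0; 1; 0; 1; 1; 2; 0];
     [:: 1; 1; 2; 0; 0; 0; 2; 0; 0; 1; 1; 2; 2; 0; 2; 0];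
     [:: 1; 1; 2; 0; 0; 0; 1; 0; 2; 0; 2; 0; 0; 1; 1; 2];
     [:: 1; 1; 1; 0; 0; 0; 2; 0; 2; 0; 2; 0; 1; 2; 0; 1]];
  [:: [:: 0; 0; 1; 2; 0; 2; 1; 0; 0; 1; 1; 1; 0; 0; 2; 1];
     [:: 0; 0; 1; 2; 0; 1; 2; 0; 0; 0; 2; 1; 0; 1; 1; 1];
     [:: 0; 0; 1; 2; 0; 1; 1; 0; 2; 2; 0; 2; 1; 2; 0; 0];
     [:: 0; 0; 1; 1; 0; 1; 2; 0; 2; 1; 0; 0; 2; 2; 2; 0];
     [:: 0; 1; 0; 2; 2; 1; 0; 1; 1; 0; 1; 0; 2; 0; 0; 2];
     [:: 0; 1; 0; 2; 0; 2; 2; 2; 0; 1; 0; 2; 0; 2; 1; 0];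
     [:: 0; 1; 1; 1; 0; 2; 0; 1; 0; 2; 0; 1; 0; 2; 1; 0];
     [:: 1; 2; 0; 2; 0; 2; 0; 1; 2; 0; 2; 0; 2; 0; 0; 2];
     [:: 1; 2; 0; 0; 2; 0; 0; 2; 1; 2; 0; 0; 2; 2; 0; 1];
     [:: 1; 2; 1; 0; 1; 0; 2; 0; 1; 0; 1; 0; 1; 0; 0; 2];
     [:: 1; 0; 2; 0; 2; 0; 2; 1; 2; 0; 1; 0; 1; 0; 0; 1];
     [:: 1; 0; 2; 0; 1; 1; 1; 0; 0; 1; 0; 1; 0; 2; 1; 0];
     [:: 1; 0; 1; 1; 2; 0; 1; 0; 0; 1; 0; 2; 0; 1; 1; 0];
     [:: 1; 1; 0; 0; 2; 0; 0; 2; 0; 0; 2; 1; 1; 0; 2; 2];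
     [:: 1; 1; 0; 0; 1; 0; 0; 2; 2; 2; 1; 0; 2; 1; 0; 0];
     [:: 1; 1; 0; 0; 1; 0; 0; 1; 1; 0; 2; 2; 0; 0; 2; 1]];
  [:: [:: 0; 1; 2; 2; 2; 0; 0; 2; 0; 2; 0; 0; 1; 2; 0; 1];
     [:: 0; 1; 0; 0; 2; 2; 1; 0; 0; 0; 1; 1; 2; 1; 1; 0];
     [:: 0; 1; 0; 0; 2; 1; 1; 0; 2; 1; 0; 2; 0; 0; 2; 2];
     [:: 0; 1; 0; 0; 1; 1; 2; 0; 2; 1; 1; 0; 0; 0; 1; 1];
     [:: 0; 1; 0; 0; 1; 1; 1; 0; 1; 0; 2; 1; 1; 1; 0; 0];
     [:: 0; 1; 1; 0; 2; 0; 2; 1; 1; 0; 2; 2; 0; 0; 1; 0];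
     [:: 0; 1; 1; 0; 1; 2; 0; 2; 1; 0; 1; 2; 0; 0; 2; 0];
     [:: 1; 2; 0; 2; 0; 1; 1; 0; 1; 0; 1; 2; 0; 0; 1; 0];
     [:: 1; 0; 2; 2; 0; 2; 2; 0; 0; 1; 0; 0; 1; 1; 0; 2];
     [:: 1; 0; 2; 1; 0; 0; 0; 2; 0; 0; 2; 2; 2; 1; 0; 1];
     [:: 1; 0; 0; 1; 2; 1; 2; 0; 1; 0; 1; 1; 0; 0; 2; 0];
     [:: 1; 0; 0; 1; 0; 2; 1; 1; 0; 1; 0; 0; 1; 2; 0; 1];
     [:: 1; 0; 1; 2; 0; 0; 0; 2; 0; 1; 2; 1; 2; 2; 0; 0];
     [:: 1; 0; 1; 2; 0; 0; 0; 1; 2; 2; 0; 0; 0; 1; 2; 1];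
     [:: 1; 0; 1; 1; 0; 0; 0; 2; 2; 2; 0; 0; 1; 0; 1; 2];
     [:: 1; 1; 2; 0; 1; 0; 0; 1; 0; 2; 0; 0; 2; 2; 0; 2]];
  [:: [:: 0; 0; 0; 1; 2; 2; 0; 2; 1; 0; 1; 0; 1; 1; 0; 2];
     [:: 0; 0; 0; 1; 2; 2; 0; 1; 0; 1; 2; 2; 2; 0; 2; 0];
     [:: 0; 0; 0; 1; 1; 2; 0; 2; 0; 2; 0; 2; 2; 2; 1; 0];
     [:: 0; 0; 0; 1; 1; 1; 0; 2; 2; 0; 2; 0; 0; 1; 2; 2];
     [:: 0; 1; 2; 2; 1; 0; 1; 0; 1; 1; 0; 2; 0; 0; 0; 2];
     [:: 0; 1; 0; 1; 2; 1; 1; 0; 0; 0; 2; 0; 1; 2; 1; 0];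
     [:: 0; 1; 0; 1; 1; 0; 2; 1; 0; 0; 1; 0; 1; 2; 2; 0];
     [:: 1; 2; 2; 0; 0; 0; 2; 0; 1; 0; 2; 1; 0; 2; 0; 2];
     [:: 1; 2; 2; 0; 0; 0; 1; 0; 0; 2; 0; 2; 1; 0; 2; 1];
     [:: 1; 2; 1; 0; 0; 0; 1; 0; 2; 1; 1; 0; 0; 2; 0; 2];
     [:: 1; 0; 2; 1; 0; 1; 0; 1; 0; 0; 1; 0; 2; 1; 1; 0];
     [:: 1; 0; 1; 0; 0; 1; 2; 2; 1; 1; 0; 2; 0; 0; 0; 1];
     [:: 1; 0; 1; 0; 1; 2; 0; 1; 0; 0; 2; 0; 1; 1; 1; 0];
     [:: 1; 1; 2; 0; 0; 2; 0; 2; 2; 1; 0; 1; 0; 0; 0; 1];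
     [:: 1; 1; 0; 2; 2; 0; 2; 0; 2; 2; 0; 2; 0; 0; 0; 2];
     [:: 1; 1; 1; 0; 0; 0; 1; 0; 1; 2; 0; 1; 2; 0; 2; 0]];
  [:: [:: 0; 0; 1; 2; 0; 2; 2; 0; 1; 2; 0; 0; 2; 2; 0; 2];
     [:: 0; 0; 1; 1; 0; 2; 2; 0; 0; 0; 1; 2; 1; 0; 1; 1];
     [:: 0; 0; 1; 1; 0; 2; 1; 0; 2; 2; 2; 0; 2; 1; 0; 0];
     [:: 0; 0; 1; 1; 0; 1; 1; 0; 1; 0; 1; 1; 0; 0; 1; 2];
     [:: 0; 1; 2; 1; 0; 2; 0; 1; 1; 0; 2; 0; 1; 0; 0; 2];
     [:: 0; 1; 0; 2; 0; 2; 1; 2; 2; 0; 1; 0; 1; 0; 0; 2];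
     [:: 0; 1; 0; 2; 1; 1; 0; 1; 0; 2; 0; 2; 0; 1; 1; 0];
     [:: 1; 2; 0; 0; 2; 0; 0; 1; 0; 0; 1; 2; 0; 1; 2; 2];
     [:: 1; 2; 0; 0; 1; 0; 0; 2; 0; 1; 2; 2; 0; 0; 1; 2];
     [:: 1; 2; 0; 0; 1; 0; 0; 1; 2; 2; 0; 1; 1; 2; 0; 0];
     [:: 1; 0; 2; 0; 2; 0; 2; 2; 0; 2; 0; 1; 0; 1; 1; 0];
     [:: 1; 0; 2; 0; 1; 2; 1; 0; 1; 0; 1; 0; 2; 0; 0; 1];
     [:: 1; 0; 1; 2; 2; 0; 1; 0; 1; 0; 2; 0; 1; 0; 0; 1];
     [:: 1; 1; 0; 0; 2; 0; 0; 1; 2; 1; 0; 0; 2; 2; 1; 0];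
     [:: 1; 1; 0; 1; 0; 1; 0; 2; 0; 2; 0; 2; 0; 2; 2; 0];
     [:: 1; 1; 1; 0; 1; 0; 2; 0; 0; 1; 0; 1; 0; 1; 2; 0]];
  [:: [:: 0; 1; 2; 1; 2; 0; 0; 2; 2; 0; 1; 2; 0; 0; 1; 0];
     [:: 0; 1; 0; 0; 2; 2; 2; 0; 1; 1; 0; 0; 1; 0; 2; 1];
     [:: 0; 1; 0; 0; 2; 1; 2; 0; 0; 2; 2; 1; 2; 2; 0; 0];
     [:: 0; 1; 0; 0; 1; 2; 2; 0; 0; 0; 2; 2; 2; 1; 0; 2];
     [:: 0; 1; 0; 0; 1; 2; 1; 0; 2; 2; 0; 0; 0; 2; 2; 1];
     [:: 0; 1; 1; 0; 2; 0; 1; 1; 0; 2; 0; 0; 1; 1; 0; 2];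
     [:: 0; 1; 1; 0; 1; 1; 0; 2; 0; 1; 0; 0; 1; 2; 0; 2];
     [:: 1; 2; 1; 0; 2; 0; 0; 2; 2; 0; 2; 2; 0; 0; 2; 0];
     [:: 1; 0; 2; 2; 0; 0; 0; 2; 1; 2; 1; 0; 0; 0; 2; 2];
     [:: 1; 0; 2; 2; 0; 0; 0; 1; 0; 0; 2; 2; 1; 2; 1; 0];
     [:: 1; 0; 2; 1; 0; 0; 0; 1; 2; 1; 0; 1; 0; 0; 2; 2];
     [:: 1; 0; 0; 1; 0; 2; 1; 2; 1; 0; 2; 1; 0; 0; 1; 0];
     [:: 1; 0; 0; 1; 1; 1; 2; 0; 0; 2; 0; 0; 1; 1; 0; 1];
     [:: 1; 0; 1; 2; 0; 2; 2; 0; 2; 0; 1; 1; 0; 0; 1; 0];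
     [:: 1; 0; 1; 1; 0; 0; 0; 1; 1; 0; 1; 2; 2; 2; 0; 0];
     [:: 1; 1; 0; 2; 0; 1; 1; 0; 0; 1; 0; 0; 2; 1; 0; 1]];
  [:: [:: 0; 0; 0; 1; 1; 1; 1; 2; 0; 1; 1; 2; 2; 0; 0; 0];
     [:: 0; 0; 1; 0; 2; 2; 1; 2; 2; 0; 0; 0; 0; 2; 1; 1];
     [:: 0; 1; 0; 2; 0; 0; 2; 2; 1; 0; 1; 1; 2; 0; 0; 1];
     [:: 0; 1; 0; 2; 0; 0; 1; 2; 0; 2; 2; 2; 0; 1; 2; 0];
     [:: 0; 1; 0; 0; 1; 2; 1; 1; 0; 1; 2; 1; 2; 0; 0; 0];
     [:: 0; 1; 0; 1; 0; 0; 2; 2; 0; 1; 2; 0; 1; 1; 1; 0];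
     [:: 0; 1; 0; 1; 0; 0; 2; 1; 2; 2; 0; 2; 2; 0; 0; 1];
     [:: 1; 2; 2; 2; 1; 0; 0; 0; 2; 0; 0; 0; 0; 1; 1; 1];
     [:: 1; 2; 1; 1; 0; 2; 0; 0; 1; 0; 0; 0; 0; 1; 2; 1];
     [:: 1; 0; 2; 0; 2; 2; 0; 0; 1; 0; 0; 2; 2; 0; 1; 2];
     [:: 1; 0; 2; 0; 2; 1; 0; 0; 0; 1; 2; 0; 0; 2; 2; 1];
     [:: 1; 0; 0; 0; 1; 2; 2; 2; 2; 0; 0; 0; 0; 2; 2; 2];
     [:: 1; 0; 1; 0; 2; 1; 0; 0; 2; 0; 0; 1; 2; 1; 0; 2];
     [:: 1; 0; 1; 0; 1; 1; 0; 0; 1; 2; 2; 0; 0; 2; 1; 0];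
     [:: 1; 1; 2; 1; 0; 0; 1; 0; 0; 2; 1; 1; 1; 0; 0; 0];
     [:: 1; 1; 1; 2; 0; 0; 0; 1; 0; 1; 1; 2; 1; 0; 0; 0]];
  [:: [:: 0; 0; 1; 1; 2; 1; 0; 2; 1; 2; 2; 0; 0; 1; 0; 0];
     [:: 0; 0; 1; 1; 1; 2; 1; 0; 0; 0; 0; 1; 1; 0; 2; 2];
     [:: 0; 1; 2; 0; 0; 2; 0; 2; 1; 0; 2; 0; 2; 2; 2; 0];
     [:: 0; 1; 2; 0; 0; 1; 0; 2; 0; 1; 1; 1; 0; 1; 0; 2];
     [:: 0; 1; 2; 0; 0; 1; 0; 1; 2; 2; 2; 0; 1; 0; 2; 0];
     [:: 0; 1; 1; 2; 2; 2; 0; 0; 2; 1; 2; 0; 0; 1; 0; 0];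
     [:: 0; 1; 1; 0; 0; 1; 0; 1; 1; 1; 0; 1; 0; 2; 0; 1];
     [:: 1; 2; 2; 0; 0; 0; 1; 1; 1; 1; 2; 0; 0; 1; 0; 0];
     [:: 1; 2; 0; 2; 0; 0; 2; 2; 0; 0; 0; 1; 1; 0; 2; 1];
     [:: 1; 0; 0; 2; 2; 0; 1; 0; 0; 2; 0; 1; 0; 2; 1; 2];
     [:: 1; 0; 0; 1; 2; 0; 2; 0; 0; 1; 0; 2; 1; 2; 0; 2];
     [:: 1; 0; 0; 1; 2; 0; 1; 0; 2; 0; 1; 0; 2; 0; 2; 1];
     [:: 1; 0; 0; 1; 1; 0; 2; 0; 2; 0; 2; 1; 2; 0; 1; 0];
     [:: 1; 0; 1; 2; 1; 1; 0; 0; 0; 0; 0; 2; 2; 0; 2; 2];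
     [:: 1; 1; 0; 0; 0; 2; 2; 1; 1; 2; 1; 0; 0; 1; 0; 0];
     [:: 1; 1; 0; 0; 1; 0; 1; 2; 0; 0; 0; 2; 1; 0; 1; 1]];
  [:: [:: 0; 0; 1; 0; 2; 0; 2; 1; 0; 1; 1; 0; 2; 1; 0; 1];
     [:: 0; 0; 1; 0; 2; 0; 1; 2; 0; 2; 1; 2; 2; 0; 0; 2];
     [:: 0; 0; 1; 0; 2; 0; 1; 1; 2; 0; 2; 1; 0; 2; 2; 0];
     [:: 0; 0; 1; 0; 1; 0; 2; 1; 2; 0; 0; 2; 0; 2; 1; 2];
     [:: 0; 1; 2; 0; 2; 2; 2; 0; 0; 0; 1; 1; 0; 2; 0; 2];
     [:: 0; 1; 2; 0; 0; 1; 1; 1; 0; 0; 1; 2; 0; 2; 0; 1];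
     [:: 0; 1; 1; 2; 0; 1; 2; 0; 1; 2; 0; 0; 1; 0; 2; 0];
     [:: 1; 2; 2; 0; 0; 1; 2; 0; 2; 2; 0; 0; 2; 0; 2; 0];
     [:: 1; 2; 0; 2; 0; 2; 0; 0; 1; 1; 0; 2; 0; 2; 2; 0];
     [:: 1; 2; 0; 1; 2; 0; 0; 1; 1; 2; 0; 0; 1; 0; 1; 0];
     [:: 1; 0; 0; 2; 2; 1; 0; 2; 2; 1; 0; 0; 1; 0; 1; 0];
     [:: 1; 0; 0; 2; 1; 0; 1; 1; 0; 0; 1; 1; 0; 1; 0; 2];
     [:: 1; 0; 1; 1; 1; 0; 0; 2; 0; 0; 1; 1; 0; 2; 0; 1];
     [:: 1; 1; 0; 2; 0; 2; 0; 0; 0; 2; 2; 0; 2; 0; 1; 1];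
     [:: 1; 1; 0; 1; 0; 2; 0; 0; 2; 0; 0; 2; 1; 1; 2; 0];
     [:: 1; 1; 0; 1; 0; 1; 0; 0; 1; 1; 2; 0; 2; 0; 0; 2]];
  [:: [:: 0; 0; 1; 2; 0; 1; 1; 1; 0; 1; 2; 0; 0; 0; 1; 2];
     [:: 0; 0; 1; 2; 1; 0; 2; 2; 2; 0; 0; 2; 1; 1; 0; 0];
     [:: 0; 1; 2; 2; 0; 0; 2; 1; 2; 0; 0; 1; 2; 1; 0; 0];
     [:: 0; 1; 2; 1; 1; 0; 0; 0; 2; 1; 2; 2; 0; 2; 0; 0];
     [:: 0; 1; 1; 2; 2; 0; 0; 0; 0; 0; 0; 2; 2; 2; 2; 1];
     [:: 0; 1; 1; 1; 2; 0; 0; 0; 2; 1; 1; 1; 1; 0; 0; 0];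
     [:: 0; 1; 1; 1; 1; 0; 0; 0; 1; 0; 0; 0; 2; 1; 1; 1];
     [:: 1; 2; 0; 0; 2; 2; 2; 0; 0; 1; 2; 0; 0; 0; 1; 1];
     [:: 1; 2; 0; 0; 1; 1; 0; 1; 0; 1; 1; 0; 0; 0; 2; 1];
     [:: 1; 0; 0; 0; 0; 2; 1; 2; 0; 1; 0; 0; 2; 1; 2; 2];
     [:: 1; 0; 0; 0; 0; 2; 1; 1; 2; 2; 1; 2; 0; 0; 1; 0];
     [:: 1; 0; 0; 0; 0; 1; 2; 2; 0; 0; 1; 0; 2; 2; 1; 2];
     [:: 1; 0; 0; 0; 0; 1; 1; 2; 2; 2; 2; 1; 0; 0; 0; 1];
     [:: 1; 0; 1; 1; 0; 0; 2; 1; 0; 2; 2; 0; 0; 0; 2; 2];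
     [:: 1; 1; 2; 0; 2; 1; 0; 0; 1; 0; 0; 2; 1; 1; 0; 0];
     [:: 1; 1; 0; 2; 1; 2; 0; 0; 1; 0; 0; 1; 1; 2; 0; 0]]
]%N.

Lemma MUWM_16_9_codes_ok : MUWM_code 16 3 MUWM_16_9_codes.
Proof. by vm_compute. Qed.

Lemma MUWM_16_9_size15 : exists S, MUWM 16 9 S /\ size S = 15%N.
Proof.
exists (map (mx_of_code 16) MUWM_16_9_codes); split; last by rewrite size_map.
exact: (@MUWM_of_code 16 3 _ isT isT MUWM_16_9_codes_ok).
Qed.

Theorem proposition6p6 : Wmax_is 16 9 15.
Proof. by split; [exact: MUWM_16_9_size15 | exact: MUWM_16_9_size_le15]. Qed.
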